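(* If $\mathscr{F}=(\Omega,\sqsubseteq,\mathcal{E},\mathcal{A},\mathcal{K},\mathcal{B})$ is an epistemic possibility frame, then for any $\omega\in\Omega$, the family $\{E\in\mathcal{E}\mid\omega\in\mathbf{A}(E)\}$ contains $\Omega$ and is closed under $\cap$ and under $\neg$, where $\neg E=\{\omega\in\Omega\mid\forall\omega'\sqsubseteq\omega,\ \omega'\notin E\}$.
   Context: For a poset $(\Omega,\sqsubseteq)$, let $\downarrow E=\{\omega\mid \omega\sqsubseteq\nu\text{ for some }\nu\in E\}$, $\downarrow\nu=\downarrow\{\nu\}$, $\rho(E)=\{\omega\mid \forall\omega'\sqsubseteq\omega\ \exists\omega''\sqsubseteq\omega'\colon \omega''\in\downarrow E\}$; $\mathcal{RO}(\Omega,\sqsubseteq)=\{E\mid\rho(E)=E\}$, a Boolean algebra under $\subseteq$ with meet $\cap$, join $E\sqcup F=\rho(E\cup F)$, complement $\neg E$ as in the claim. $\max(E)=\{\omega\in E\mid\text{no }\nu\in E\text{ with }\omega\sqsubseteq\nu,\ \nu\not\sqsubseteq\omega\}$. A possibility frame $(\Omega,\sqsubseteq,\mathcal{E})$ has $\mathcal{E}\subseteq\mathcal{RO}(\Omega,\sqsubseteq)$ nonempty, closed under binary $\cap$ and $\neg$; quasi-principal means: for all $E\in\mathcal{E}$, $\omega\in E$, $\omega\in\downarrow\max(E)$. A possibility frame with awareness $(\Omega,\sqsubseteq,\mathcal{E},\mathcal{A})$: $(\Omega,\sqsubseteq,\mathcal{E})$ quasi-principal with maximum element $m$; $\mathcal{A}:\Omega\to\wp(\Omega)$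 with, for all $\omega,\omega',\nu$: $m\in\mathcal{A}(\omega)$; $\nu\in\mathcal{A}(\omega)\Rightarrow\downarrow\nu\in\mathcal{E}$; $\omega'\sqsubseteq\omega\Rightarrow\mathcal{A}(\omega)\subseteq\mathcal{A}(\omega')$; $\nu\notin\mathcal{A}(\omega)\Rightarrow\exists\omega'\sqsubseteq\omega\ \forall\omega''\sqsubseteq\omega'\ \nu\notin\mathcal{A}(\omega'')$; if $\nu\in\mathcal{A}(\omega)$, $E,E'\in\mathcal{E}$ and $\max(E\cap\downarrow\nu)\cup\max(E'\cap\downarrow\nu)\subseteq\mathcal{A}(\omega)$ then $\max((E\sqcup E')\cap\downarrow\nu)\subseteq\mathcal{A}(\omega)$; and $\mathcal{E}$ is closed under $\mathbf{A}$, where $\omega\in\mathbf{A}(E)$ iff $\forall\omega'\sqsubseteq\omega\ \forall\nu\in\mathcal{A}(\omega')$: $\max(E\cap\downarrow\nu)\cup\max(\neg E\cap\downarrow\nu)\subseteq\mathcal{A}(\omega')$. An epistemic possibility frame $(\Omega,\sqsubseteq,\mathcal{E},\mathcal{A},\mathcal{K},\mathcal{B})$ adds $\mathcal{K},\mathcal{B}:\Omega\to\wp(\Omega)$ such that for $\mathcal{R}\in\{\mathcal{K},\mathcal{B}\}$: $\omega'\sqsubseteq\omega\Rightarrow\mathcal{R}(\omega')\subseteq\mathcal{R}(\omega)$; $\mathcal{R}(\omega)\in\mathcal{RO}(\Omega,\sqsubseteq)$; $\nu\in\mathcal{R}(\omega)\Rightarrow\exists\omega'\sqsubseteq\omega\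 \forall\omega''\sqsubseteq\omega'\ \exists\nu'\sqsubseteq\nu\colon\nu'\in\mathcal{R}(\omega'')$; $\omega\in\mathcal{K}(\omega)$; $\mathcal{B}(\omega)\neq\varnothing$; $\mathcal{B}(\omega)\subseteq\mathcal{K}(\omega)$; and $\{\omega\mid\mathcal{R}(\omega)\subseteq E\}\in\mathcal{E}$ for $E\in\mathcal{E}$. *)

Set Implicit Arguments.

Section PossDefs.
Variable O : Type.
Variable le : O -> O -> Prop.

Definition pset := O -> Prop.
Definition fullset : pset := fun _ => True.
Definition inter (E F : pset) : pset := fun w => E w /\ F w.
Definition union (E F : pset) : pset := fun w => E w \/ F w.
Definition subset (E F : pset) : Prop := forall w, E w -> F w.

Definition down (E : pset) : pset := fun w => exists v, E v /\ le w v.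
Definition downp (v : O) : pset := down (fun x => x = v).
Definition rho (E : pset) : pset :=
  fun w => forall w', le w' w -> exists w'', le w'' w' /\ down E w''.
Definition RO (E : pset) : Prop := rho E = E.
Definition neg (E : pset) : pset := fun w => forall w', le w' w -> ~ E w'.
Definition join (E F : pset) : pset := rho (union E F).
Definition maxs (E : pset) : pset :=
  fun w => E w /\ ~ (exists v, E v /\ le w v /\ ~ le v w).

Definition is_poset : Prop :=
  (forall w, le w w) /\
  (forall a b c, le a b -> le b c -> le a c) /\
  (forall a b, le a b -> le b a -> a = b).

Record poss_frame (Ev : pset -> Prop) : Prop := {
  pf_poset : is_poset;
  pf_RO : forall E, Ev E -> RO E;
  pf_nonempty : exists E, Ev E;
  pf_inter : forall E F, Ev E -> Ev F -> Ev (inter E F);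
  pf_neg : forall E, Ev E -> Ev (neg E)
}.

Definition quasi_principal (Ev : pset -> Prop) : Prop :=
  forall E, Ev E -> forall w, E w -> down (maxs E) w.

Definition Aop (A : O -> pset) (E : pset) : pset :=
  fun w => forall w', le w' w -> forall v, A w' v ->
    subset (union (maxs (inter E (downp v))) (maxs (inter (neg E) (downp v))))
           (A w').

Record awareness_frame (Ev : pset -> Prop) (A : O -> pset) (m : O) : Prop := {
  af_frame : poss_frame Ev;
  af_qp : quasi_principal Ev;
  af_max : forall w, le w m;
  af_m : forall w, A w m;
  af_down : forall w v, A w v -> Ev (downp v);
  af_mono : forall w w', le w' w -> subset (A w) (A w');
  af_refine : forall w v, ~ A w v ->
      exists w', le w' w /\ forall w'', le w'' w' -> ~ A w'' v;
  af_join : forall w v E E', A w v -> Ev E -> Ev E' ->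
      subset (union (maxs (inter E (downp v))) (maxs (inter E' (downp v)))) (A w) ->
      subset (maxs (inter (join E E') (downp v))) (A w);
  af_closedA : forall E, Ev E -> Ev (Aop A E)
}.

Record access_cond (Ev : pset -> Prop) (R : O -> pset) : Prop := {
  ac_mono : forall w w', le w' w -> subset (R w') (R w);
  ac_RO : forall w, RO (R w);
  ac_refine : forall w v, R w v ->
      exists w', le w' w /\ forall w'', le w'' w' ->
        exists v', le v' v /\ R w'' v';
  ac_box : forall E, Ev E -> Ev (fun w => subset (R w) E)
}.

Record epistemic_frame (Ev : pset -> Prop) (A : O -> pset) (m : O)
    (K B : O -> pset) : Prop := {
  ef_aw : awareness_frame Ev A m;
  ef_K : access_cond Ev K;
  ef_B : access_cond Ev B;
  ef_Krefl : forall w, K w w;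
  ef_Bne : forall w, exists v, B w v;
  ef_BK : forall w, subset (B w) (K w)
}.

End PossDefs.

(* The two Boolean facts about regular open sets that drive the argument are
   double negation, [neg (neg E) = E], and De Morgan, [join (neg E) (neg F) =
   neg (inter E F)].  Since the awareness condition is symmetric in [E] and
   [neg E], double negation gives closure under [neg] at once.  For [inter E F],
   a maximal point [x] of [E ∩ F ∩ ↓v] lies, by quasi-principality, below a
   maximal point [u] of [E ∩ ↓v]; awareness of [E] makes [u] available, and [x]
   is maximal in [F ∩ ↓u], so awareness of [F] makes [x] available.  The
   negative half is De Morgan plus the join condition on [𝒜].  Finally the
   maximal points of [Ω ∩ ↓v] are just [v], and [¬Ω] is empty. *)
From Stdlib Require Import Classical FunctionalExtensionality PropExtensionality.

Set Implicit Arguments.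

Section RegularOpen.
Variable O : Type.
Variable le : O -> O -> Prop.
Hypothesis le_refl : forall w, le w w.
Hypothesis le_trans : forall a b c, le a b -> le b c -> le a c.

Lemma downpP (v x : O) : downp le v x <-> le x v.
Proof.
  split.
  - intros [v' [-> Hxv]]. exact Hxv.
  - intros Hxv. exists v. split; [reflexivity | exact Hxv].
Qed.

Lemma RO_down_closed (E : pset O) w a : RO le E -> E w -> le a w -> E a.
Proof.
  intros HRO Ew Haw. rewrite <- HRO in Ew |- *.
  intros w' Hw'. apply Ew. eauto.
Qed.

Lemma neg_inter_neg (E : pset O) : neg le (inter E (neg le E)) = @fullset O.
Proof.
  apply functional_extensionality; intro w.
  apply propositional_extensionality. split; [intros _; exact I |].
  intros _ w' _ [Ew' nEw']. exact (nEw' w' (le_refl w') Ew').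
Qed.

Lemma neg_negK (E : pset O) : RO le E -> neg le (neg le E) = E.
Proof.
  intros HRO. apply functional_extensionality; intro w.
  apply propositional_extensionality. split.
  - intros nnEw. rewrite <- HRO. intros w' Hw'.
    apply NNPP; intro Hno. apply (nnEw w' Hw'). intros w'' Hw'' Ew''.
    apply Hno. exists w''. split; [exact Hw'' | exists w''; auto].
  - intros Ew w' Hw' nEw'.
    exact (nEw' w' (le_refl w') (RO_down_closed HRO Ew Hw')).
Qed.

Lemma join_neg (E F : pset O) : RO le E -> RO le F ->
  join le (neg le E) (neg le F) = neg le (inter E F).
Proof.
  intros HE HF. apply functional_extensionality; intro w.
  apply propositional_extensionality. split.
  - intros Hjoin w' Hw' [Ew' Fw'].
    destruct (Hjoin w' Hw') as [w'' [Hw'' [z [[nEz | nFz] Hz]]]].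
    + apply (nEz w'' Hz). eapply RO_down_closed; eauto.
    + apply (nFz w'' Hz). eapply RO_down_closed; eauto.
  - intros nEFw w' Hw'.
    assert (Hdown : forall u, le u w' -> neg le E u \/ neg le F u ->
                    exists w'', le w'' w' /\ down le (union (neg le E) (neg le F)) w'').
    { intros u Hu Hneg. exists u. split; [exact Hu |]. exists u; auto. }
    (* Otherwise some [u <= w'] lies in [E] and some [t <= u] in [F]; [t] then
       lies in [inter E F], contradicting [neg (inter E F) w]. *)
    destruct (classic (neg le E w')) as [nEw' | Hu]; [apply (Hdown w'); auto |].
    apply not_all_ex_not in Hu as [u Hu]. apply imply_to_and in Hu as [Hu Eu].
    apply NNPP in Eu.
    destruct (classic (neg le F u)) as [nFu | Ht]; [apply (Hdown u); auto |].
    apply not_all_ex_not in Ht as [t Ht]. apply imply_to_and in Ht as [Ht Ft].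
    apply NNPP in Ft. exfalso.
    apply (nEFw t); [eauto |]. split; [eapply RO_down_closed; eauto | exact Ft].
Qed.

Lemma maxs_inter_downp_below (E F : pset O) v u x : RO le E ->
  maxs le (inter (inter E F) (downp le v)) x ->
  inter E (downp le v) u -> le x u ->
  maxs le (inter F (downp le u)) x.
Proof.
  intros HRO [[[_ Fx] _] Hxmax] [Eu Huv] Hxu. apply downpP in Huv.
  split; [split; [exact Fx | apply downpP; exact Hxu] |].
  intros [y [[Fy Hyu] [Hxy Hyx]]]. apply downpP in Hyu.
  apply Hxmax. exists y. split; [| auto].
  split; [split; [eapply RO_down_closed; eauto | exact Fy] |].
  apply downpP. eauto.
Qed.

Hypothesis le_antisym : forall a b, le a b -> le b a -> a = b.

Lemma maxs_fullset_downp v x : maxs le (inter (@fullset O) (downp le v)) x -> x = v.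
Proof.
  intros [[_ Hxv] Hxmax]. apply downpP in Hxv.
  apply le_antisym; [exact Hxv |].
  apply NNPP; intro Hvx. apply Hxmax. exists v.
  split; [split; [exact I | apply downpP, le_refl] | auto].
Qed.

Lemma Aop_fullset (A : O -> pset O) w : Aop le A (@fullset O) w.
Proof.
  intros w' _ v Av x [Hx | [[nFx _] _]].
  - rewrite (maxs_fullset_downp Hx). exact Av.
  - exfalso. exact (nFx x (le_refl x) I).
Qed.

Lemma Aop_neg (A : O -> pset O) (E : pset O) w : RO le E ->
  Aop le A E w -> Aop le A (neg le E) w.
Proof.
  intros HRO HA w' Hw' v Av x Hx. rewrite (neg_negK HRO) in Hx.
  apply (HA w' Hw' v Av x). destruct Hx; [right | left]; assumption.
Qed.

End RegularOpen.

Lemma poss_frame_fullset (O : Type) (le : O -> O -> Prop) (Ev : pset O -> Prop) :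
  poss_frame le Ev -> Ev (@fullset O).
Proof.
  intros Hpf. destruct (pf_nonempty Hpf) as [E HE].
  rewrite <- (neg_inter_neg le (proj1 (pf_poset Hpf)) E).
  apply (pf_neg Hpf), (pf_inter Hpf); [exact HE | exact (pf_neg Hpf _ HE)].
Qed.

Lemma Aop_inter (O : Type) (le : O -> O -> Prop) (Ev : pset O -> Prop)
    (A : O -> pset O) (m : O) (E F : pset O) w :
  awareness_frame le Ev A m -> Ev E -> Ev F ->
  Aop le A E w -> Aop le A F w -> Aop le A (inter E F) w.
Proof.
  intros Haw HE HF HAE HAF.
  pose proof (af_frame Haw) as Hpf.
  destruct (pf_poset Hpf) as [Hrefl [Htrans _]].
  intros w' Hw' v Av x [Hx | Hx].
  - pose proof Hx as [[[Ex _] Hxv] _].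
    assert (HEv : Ev (inter E (downp le v))) by exact (pf_inter Hpf _ _ HE (af_down Haw _ _ Av)).
    destruct (af_qp Haw _ HEv x (conj Ex Hxv)) as [u [Hu Hxu]].
    assert (Au : A w' u) by exact (HAE w' Hw' v Av u (or_introl Hu)).
    apply (HAF w' Hw' u Au x). left.
    exact (maxs_inter_downp_below Htrans (pf_RO Hpf _ HE) Hx (proj1 Hu) Hxu).
  - rewrite <- (join_neg Hrefl Htrans (pf_RO Hpf _ HE) (pf_RO Hpf _ HF)) in Hx.
    apply (af_join Haw _ Av (pf_neg Hpf _ HE) (pf_neg Hpf _ HF)); [| exact Hx].
    intros z [Hz | Hz]; [apply (HAE w' Hw' v Av z) | apply (HAF w' Hw' v Av z)];
      right; exact Hz.
Qed.

Theorem corollary4p4 (O : Type) (le : O -> O -> Prop) (Ev : pset O -> Prop)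
    (A : O -> pset O) (m : O) (K B : O -> pset O) :
  epistemic_frame le Ev A m K B ->
  forall w : O,
    (Ev (@fullset O) /\ Aop le A (@fullset O) w) /\
    (forall E F : pset O,
        Ev E /\ Aop le A E w -> Ev F /\ Aop le A F w ->
        Ev (inter E F) /\ Aop le A (inter E F) w) /\
    (forall E : pset O,
        Ev E /\ Aop le A E w -> Ev (neg le E) /\ Aop le A (neg le E) w).
Proof.
  intros Hef w.
  pose proof (ef_aw Hef) as Haw.
  pose proof (af_frame Haw) as Hpf.
  destruct (pf_poset Hpf) as [Hrefl [Htrans Hanti]].
  split; [| split].
  - split; [exact (poss_frame_fullset Hpf) | exact (Aop_fullset Hrefl Hanti A w)].
  - intros E F [HE HAE] [HF HAF].
    split; [exact (pf_inter Hpf _ _ HE HF) | exact (Aop_inter Haw HE HF HAE HAF)].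
  - intros E [HE HAE].
    split; [exact (pf_neg Hpf _ HE) | exact (Aop_neg Hrefl Htrans (pf_RO Hpf _ HE) HAE)].
Qed.
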